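(* Let $p$ be an odd prime and $n\ge1$. Let $g_0,\ldots,g_{p-1}$ be quadratic near-bent functions from $\mathbb{F}_{p^n}$ to $\mathbb{F}_p$ whose corresponding linearized polynomials $L_0,\ldots,L_{p-1}$ all have the same kernel $\{c\beta: c\in\mathbb{F}_p\}$ in $\mathbb{F}_{p^n}$, for some $\beta\in\mathbb{F}_{p^n}^*$. Let $b_0,\ldots,b_{p-1}\in\mathbb{F}_{p^n}$ satisfy $g_k(\beta)+\mathrm{Tr}_n(b_k\beta)=g_0(\beta)+k$ for $0\le k\le p-1$. Then the near-bent functions $f_k(x)=g_k(x)+\mathrm{Tr}_n(b_kx)$, $0\le k\le p-1$, satisfy $\mathrm{supp}(\widehat{f_i})\cap\mathrm{supp}(\widehat{f_j})=\emptyset$ for $0\le i\ne j\le p-1$.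
   Context: $\epsilon_p=e^{2\pi i/p}$, $\mathrm{Tr}_n$ the absolute trace, $\widehat{f}(b)=\sum_{x\in\mathbb{F}_{p^n}}\epsilon_p^{f(x)-\mathrm{Tr}_n(bx)}$, $\mathrm{supp}(\widehat f)=\{b:\widehat f(b)\ne0\}$. Near-bent: $|\widehat{f}(b)|^2\in\{0,p^{n+1}\}$ for all $b$. A quadratic function is $g(x)=\mathrm{Tr}_n\big(\sum_{i=0}^l a_ix^{p^i+1}\big)$ with $a_i\in\mathbb{F}_{p^n}$; its corresponding linearized polynomial is $L(z)=\sum_{i=0}^l\big(a_i^{p^l}z^{p^{l+i}}+a_i^{p^{l-i}}z^{p^{l-i}}\big)$, regarded as an $\mathbb{F}_p$-linear map on $\mathbb{F}_{p^n}$. *)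

From HB Require Import structures.
From mathcomp Require Import all_boot all_order all_algebra all_field.
Set Implicit Arguments. Unset Strict Implicit. Unset Printing Implicit Defensive.
Import Order.TTheory GRing.Theory Num.Theory.
Local Open Scope ring_scope.

(* eps_p = e^(2 pi i/p) = (p.-root (-1))^2, since p.-root(-1) (minimal
   nonnegative argument) is e^(i pi/p) *)
Definition eps (p : nat) : algC := (p.-root (-1 : algC)) ^+ 2.

Section Defs.
Variable F : finFieldType.

Definition trn (p n : nat) (x : F) : F := \sum_(i < n) x ^+ (p ^ i).

Definition quadf (p n l : nat) (a : nat -> F) (x : F) : F :=
  trn p n (\sum_(i < l.+1) a i * x ^+ (p ^ i + 1)).

Definition linpol (p l : nat) (a : nat -> F) (z : F) : F :=
  \sum_(i < l.+1) (a i ^+ (p ^ l) * z ^+ (p ^ (l + i))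
                   + a i ^+ (p ^ (l - i)) * z ^+ (p ^ (l - i))).

(* epsilon_p^t for t in the prime subfield {k%:R : k < p} of F *)
Definition epsF (p : nat) (t : F) : algC :=
  if [pick k : 'I_p | (k%:R : F) == t] is Some k
  then eps p ^+ k else 0.

Definition walsh (p n : nat) (f : F -> F) (b : F) : algC :=
  \sum_(x : F) epsF p (f x - trn p n (b * x)).

Definition near_bent (p n : nat) (f : F -> F) : Prop :=
  forall b : F, `|walsh p n f b| ^+ 2 = 0 \/ `|walsh p n f b| ^+ 2 = (p ^ n.+1)%:R.

Definition wsupp (p n : nat) (f : F -> F) : {set F} :=
  [set b | walsh p n f b != 0].
End Defs.

(* If [beta] lies in the kernel of the linearized polynomial of [g], then
   [g (x + beta) = g x + g beta], so translating the summation variable of the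
   Walsh transform of [f = g + Tr(b .)] by [beta] multiplies [f^(lambda)] by
   [eps_p^(f beta - Tr(lambda beta))]. Hence [lambda] can be in the support of
   [f^] only if [f beta = Tr(lambda beta)]: the value [f beta] is determined
   by [lambda], and the [f_k beta = g_0 beta + k] are pairwise distinct. *)

From HB Require Import structures.
From mathcomp Require Import all_boot all_order all_algebra all_field.
From mathcomp Require Import ring.
Set Implicit Arguments. Unset Strict Implicit. Unset Printing Implicit Defensive.
Import Order.TTheory GRing.Theory Num.Theory.
Local Open Scope ring_scope.

Lemma eps_prim_root (p : nat) : prime p -> p.-primitive_root (eps p).
Proof.
move=> p_pr; have p_gt0 := prime_gt0 p_pr.
have root_p : (p.-root (-1 : algC)) ^+ p = -1 by rewrite rootCK.
have eps_p : eps p ^+ p = 1 by rewrite /eps exprAC root_p sqrrN expr1n.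
have [m prim_m m_dvd_p] := prim_order_exists p_gt0 eps_p.
case/orP: ((primeP p_pr).2 m m_dvd_p) => /eqP m_eq; last by rewrite m_eq in prim_m.
have := prim_expr_order prim_m; rewrite m_eq expr1 /eps => /eqP.
rewrite sqrf_eq1 => /orP [/eqP r1 | /eqP rN1].
  move: root_p; rewrite r1 expr1n => /eqP.
  by rewrite eq_sym lt_eqF // (lt_trans (ltrN10 _) ltr01).
by move: (rootC_lt0 (-1 : algC) (prime_gt1 p_pr)); rewrite rN1 ltrN10.
Qed.

Section PrimeSubfield.
Variables (F : finFieldType) (p : nat).
Hypothesis pcharFp : p \in [pchar F].

Let p_pr : prime p := pcharf_prime pcharFp.
Let p_gt0 : (0 < p)%N := prime_gt0 p_pr.

Lemma exprDpX i (x y : F) : (x + y) ^+ (p ^ i) = x ^+ (p ^ i) + y ^+ (p ^ i).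
Proof.
by apply: exprDn_pchar; rewrite (eq_pnat _ (pcharf_eq pcharFp)) pnatX pnat_id.
Qed.

Lemma exprDp (x y : F) : (x + y) ^+ p = x ^+ p + y ^+ p.
Proof. by rewrite -!(pFrobenius_autE pcharFp) rmorphD. Qed.

Lemma exprBp (x y : F) : (x - y) ^+ p = x ^+ p - y ^+ p.
Proof. by rewrite -!(pFrobenius_autE pcharFp) rmorphB. Qed.

Lemma eqr_nat_pchar k k' :
  (k < p)%N -> (k' < p)%N -> (k%:R == k'%:R :> F) = (k == k').
Proof.
wlog le_kk' : k k' / (k <= k')%N => [wlog_le | _ lt_k'p].
  case/orP: (leq_total k k') => /wlog_le le ltk ltk'; first exact: le.
  by rewrite eq_sym le // eq_sym.
rewrite eq_sym -subr_eq0 -natrB // -(dvdn_pcharf pcharFp) -eqn_mod_dvd //.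
by rewrite !modn_small // (leq_ltn_trans le_kk').
Qed.

(* The [p] elements [k%:R] are roots of ['X^p - 'X], which has no others. *)
Lemma expp_fixed_natr (y : F) : y ^+ p = y -> exists k, y = k%:R.
Proof.
move=> y_fixed; pose S : seq F := [seq k%:R | k <- iota 0 p].
have [/mapP [k _ ->] | y_notin_S] := boolP (y \in S); first by exists k.
pose P : {poly F} := 'X^p - 'X.
have size_P : size P = p.+1.
  by rewrite size_polyDl size_polyXn // size_polyN size_polyX ltnS prime_gt1.
have P_neq0 : P != 0 by rewrite -size_poly_eq0 size_P.
have roots_P : all (root P) (y :: S).
  rewrite /= /root !hornerE y_fixed subrr eqxx /=.
  apply/allP => _ /mapP [k _ ->]; rewrite /root !hornerE -natrX.
  by rewrite -(GRing.natr_mod_pchar pcharFp) fermat_little // (GRing.natr_mod_pchar pcharFp) subrr.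
have uniq_roots : uniq (y :: S).
  rewrite /= y_notin_S map_inj_in_uniq ?iota_uniq // => k k'.
  by rewrite !mem_iota !add0n => /= ltk ltk' /eqP; rewrite eqr_nat_pchar // => /eqP.
have := max_poly_roots P_neq0 roots_P uniq_roots.
by rewrite size_P /= size_map size_iota ltnn.
Qed.

Lemma epsF_natr m : epsF p (m%:R : F) = eps p ^+ m.
Proof.
have eps_p := prim_expr_order (eps_prim_root p_pr).
rewrite /epsF -(expr_mod m eps_p); case: pickP => [k | /(_ (Ordinal (ltn_pmod m p_gt0)))].
  by rewrite -(GRing.natr_mod_pchar pcharFp m) eqr_nat_pchar ?ltn_pmod // => /eqP ->.
by rewrite /= (GRing.natr_mod_pchar pcharFp) eqxx.
Qed.

Lemma epsFD (y z : F) :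
  y ^+ p = y -> z ^+ p = z -> epsF p (y + z) = epsF p y * epsF p z.
Proof.
move=> /expp_fixed_natr [k ->] /expp_fixed_natr [m ->].
by rewrite -natrD !epsF_natr exprD.
Qed.

Lemma epsF_eq1 (y : F) : y ^+ p = y -> epsF p y = 1 -> y = 0.
Proof.
move=> /expp_fixed_natr [k ->]; rewrite epsF_natr => /eqP.
by rewrite -(prim_order_dvd (eps_prim_root p_pr)) (dvdn_pcharf pcharFp) => /eqP.
Qed.

End PrimeSubfield.

Section Trace.
Variables (F : finFieldType) (p n : nat).
Hypotheses (pcharFp : p \in [pchar F]) (card_F : #|F| = (p ^ n)%N).

Local Notation Tr := (@trn F p n).

Let expr0pX i : (0 : F) ^+ (p ^ i) = 0.
Proof. by rewrite expr0n expn_eq0 eqn0Ngt prime_gt0 ?(pcharf_prime pcharFp). Qed.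

Lemma trn0 : Tr 0 = 0.
Proof. by rewrite /trn big1. Qed.

Lemma trnD (x y : F) : Tr (x + y) = Tr x + Tr y.
Proof. by rewrite /trn -big_split; apply: eq_bigr => i _; exact: exprDpX. Qed.

Lemma trn_sum (I : Type) (r : seq I) (P : pred I) (G : I -> F) :
  Tr (\sum_(j <- r | P j) G j) = \sum_(j <- r | P j) Tr (G j).
Proof. exact: (big_morph _ trnD trn0). Qed.

(* [x ^+ (p ^ n) = x] makes the Frobenius permute the conjugates cyclically. *)
Lemma trn_expp (x : F) : Tr (x ^+ p) = Tr x.
Proof.
rewrite /trn; case: n card_F => [|m] card_F'; first by rewrite !big_ord0.
rewrite big_ord_recr big_ord_recl /= -exprM -expnS -card_F' expf_card expn0 expr1 addrC.
by congr (_ + _); apply: eq_bigr => i _; rewrite -exprM -expnS.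
Qed.

Lemma trn_exppX j (x : F) : Tr (x ^+ (p ^ j)) = Tr x.
Proof. by elim: j => [|j IHj]; rewrite ?expr1 // expnSr exprM trn_expp. Qed.

Lemma expp_trn (x : F) : Tr x ^+ p = Tr x.
Proof.
rewrite -{2}(trn_expp x) /trn -[p in _ ^+ p]expn1.
rewrite (big_morph _ (exprDpX pcharFp 1) (expr0pX 1)).
by apply: eq_bigr => i _; rewrite -!exprM mulnC.
Qed.

Lemma walsh_neq0_translate (f : F -> F) (beta lambda : F) :
    (forall x, f x ^+ p = f x) -> (forall x, f (x + beta) = f x + f beta) ->
  walsh p n f lambda != 0 -> f beta = Tr (lambda * beta).
Proof.
move=> f_fixed f_translate walsh_neq0.
pose h x := f x - Tr (lambda * x).
have h_fixed x : h x ^+ p = h x by rewrite exprBp // f_fixed expp_trn.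
have h_translate x : h (x + beta) = h x + h beta.
  by rewrite /h f_translate mulrDr trnD opprD addrACA.
have walsh_rot : walsh p n f lambda = walsh p n f lambda * epsF p (h beta).
  rewrite /walsh {1}(reindex_inj (addIr beta)) mulr_suml /=.
  apply: eq_bigr => x _; rewrite -epsFD ?h_fixed //.
  exact: (congr1 (epsF p) (h_translate x)).
apply/subr0_eq/(epsF_eq1 pcharFp (h_fixed beta)).
by apply: (mulfI walsh_neq0); rewrite mulr1 -walsh_rot.
Qed.

Lemma trn_mul_linpol l (a : nat -> F) (x y : F) :
  Tr (x ^+ (p ^ l) * linpol p l a y) =
  Tr (\sum_(i < l.+1) a i * (x ^+ (p ^ i) * y + y ^+ (p ^ i) * x)).
Proof.
rewrite /linpol mulr_sumr !trn_sum; apply: eq_bigr => i _.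
have le_il : (i <= l)%N by rewrite -ltnS.
rewrite !mulrDr !trnD addrC; congr (_ + _).
  rewrite -[RHS](trn_exppX (l - i)) !exprMn -!exprM -!expnD subnKC //.
  by rewrite mulrCA.
rewrite -[RHS](trn_exppX l) !exprMn -!exprM -!expnD [(i + l)%N]addnC.
by congr Tr; ring.
Qed.

(* The polar form of [quadf] is [Tr (x ^+ (p ^ l) * L y)], so roots of [L] are
   additive periods. *)
Lemma quadfD_linpol_root l (a : nat -> F) (beta x : F) :
  linpol p l a beta = 0 ->
  quadf p n l a (x + beta) = quadf p n l a x + quadf p n l a beta.
Proof.
move=> L_beta.
have expand_square : \sum_(i < l.+1) a i * (x + beta) ^+ (p ^ i + 1) =
    \sum_(i < l.+1) a i * x ^+ (p ^ i + 1) + \sum_(i < l.+1) a i * beta ^+ (p ^ i + 1)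
    + \sum_(i < l.+1) a i * (x ^+ (p ^ i) * beta + beta ^+ (p ^ i) * x).
  by rewrite -!big_split; apply: eq_bigr => i _ /=; rewrite !exprD !expr1 exprDpX //; ring.
by rewrite /quadf expand_square !trnD -trn_mul_linpol L_beta mulr0 trn0 addr0.
Qed.

Lemma expp_quadf l (a : nat -> F) (x : F) : quadf p n l a x ^+ p = quadf p n l a x.
Proof. exact: expp_trn. Qed.

Lemma walsh_quadf_affine_neq0 l (a : nat -> F) (b beta lambda : F) :
    linpol p l a beta = 0 ->
  walsh p n (fun x => quadf p n l a x + Tr (b * x)) lambda != 0 ->
  quadf p n l a beta + Tr (b * beta) = Tr (lambda * beta).
Proof.
move=> L_beta; apply: walsh_neq0_translate => x.
  by rewrite exprDp // expp_quadf expp_trn.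
by rewrite quadfD_linpol_root // mulrDr trnD addrACA.
Qed.

End Trace.

Theorem theorem5 (F : finFieldType) (p n : nat)
  (hp : prime p) (hodd : odd p) (hn : (0 < n)%N)
  (hchar : p \in [pchar F]) (hcard : #|F| = (p ^ n)%N)
  (l : nat -> nat) (a : nat -> nat -> F) (beta : F) (b : nat -> F) :
  beta != 0 ->
  (forall k, (k < p)%N -> near_bent p n (quadf p n (l k) (a k))) ->
  (forall k, (k < p)%N -> forall z : F,
      linpol p (l k) (a k) z = 0 <-> exists c : 'I_p, z = (c%:R : F) * beta) ->
  (forall k, (k < p)%N ->
      quadf p n (l k) (a k) beta + trn p n (b k * beta)
      = quadf p n (l 0%N) (a 0%N) beta + (k%:R : F)) ->
  forall i j, (i < p)%N -> (j < p)%N -> i != j ->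
    wsupp p n (fun x => quadf p n (l i) (a i) x + trn p n (b i * x))
    :&: wsupp p n (fun x => quadf p n (l j) (a j) x + trn p n (b j * x)) = set0.
Proof.
move=> _ _ ker_L f_beta i j lt_ip lt_jp neq_ij.
apply/setP => lambda; rewrite !inE; apply/negP => /andP [supp_i supp_j].
have L_beta k : (k < p)%N -> linpol p (l k) (a k) beta = 0.
  by move=> lt_kp; apply/(ker_L k lt_kp); exists (Ordinal (prime_gt1 hp)); rewrite mul1r.
have := walsh_quadf_affine_neq0 hchar hcard (L_beta i lt_ip) supp_i.
rewrite -(walsh_quadf_affine_neq0 hchar hcard (L_beta j lt_jp) supp_j) !f_beta //.
by move/addrI/eqP; rewrite (eqr_nat_pchar hchar) // (negPf neq_ij).
Qed.
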